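(* There exists a distribution $F$ (with $n=2$ bidders per step, so the joint value distribution is $F^2$) such that the WDPP mechanism is asymptotically stable with respect to $F^2$ but the UDPP mechanism is unstable (not asymptotically stable) with respect to $F^2$.
   Context: Dynamic posted-price setting: at each time step a block with $m$ slots is produced; $n$ bidders arrive with values drawn i.i.d. from $F$ (joint distribution $F^n$), each participating once and bidding truthfully. Given posted price $q>0$, $M(q)=\{i:b_i\ge q\}$; a block $B\subseteq M(q)$ with $|B|\le m$ is chosen, each $i\in B$ gets a slot and pays $q$, and the next price is $T(q,B)$. WDPP: $B$ is the $\min\{m,|M(q)|\}$ highest bids in $M(q)$, and $T_W(q,B)=\alpha\frac1m\sum_{i\in B}b_i+(1-\alpha)q$, $\alpha\in[0,1]$. UDPP: $B$ is a uniformly random subset of $M(q)$ of size $\min\{m,|M(q)|\}$, and $T_U(q,B)=\alpha\frac{|B|}{m}(1+\delta)q+(1-\alpha)q$, $\alpha\in(0,1)$, $\delta>0$. Let $E_T(q)=\mathbb{E}[T(q,B)]$ over values and allocation randomness; an equilibrium price is $z$ with $E_T(z)=z$. The mechanism is asymptotically stable with respect to $F^n$ if for every $q_0>0$ the sequence $q_{k+1}=E_T(q_k)$ converges to an equilibrium price; otherwise it is unstable. *)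

From HB Require Import structures.
From mathcomp Require Import all_boot all_order all_algebra.
From mathcomp Require Import all_classical all_reals all_analysis.
Set Implicit Arguments. Unset Strict Implicit. Unset Printing Implicit Defensive.
Import Order.TTheory GRing.Theory Num.Theory.
Import numFieldNormedType.Exports.
Local Open Scope classical_set_scope.
Local Open Scope ring_scope.

Section DPP.
Variable R : realType.

Definition Mq (q : R) (bs : seq R) : seq R := seq.filter (fun b => q <= b) bs.

Definition blockW (m : nat) (q : R) (bs : seq R) : seq R :=
  take m (sort (fun x y => y <= x) (Mq q bs)).

Definition TW (m : nat) (alpha q : R) (bs : seq R) : R :=
  alpha * (m%:R)^-1 * (\sum_(b <- blockW m q bs) b) + (1 - alpha) * q.

(* UDPP: |B| = min(m, |M(q)|) for the uniformly random block; T_U depends on B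
   only through |B|, so it is a deterministic function of the bids. *)
Definition TU (m : nat) (alpha delta q : R) (bs : seq R) : R :=
  alpha * ((minn m (size (Mq q bs)))%:R / m%:R) * (1 + delta) * q + (1 - alpha) * q.

Definition ET2 (F : probability R R) (T : R -> seq R -> R) (q : R) : R :=
  fine (\int[F \x F]_p (T q [:: p.1; p.2])%:E)%E.

Definition asymptotically_stable (F : probability R R) (T : R -> seq R -> R) : Prop :=
  forall q0 : R, 0 < q0 ->
    exists z : R, ET2 F T z = z /\
      (fun k : nat => iter k (ET2 F T) q0) @ \oo --> z.

End DPP.

From HB Require Import structures.
From mathcomp Require Import all_boot all_order all_algebra.
From mathcomp Require Import all_classical all_reals all_analysis.
From mathcomp Require Import measurable_realfun ring lra.
Set Implicit Arguments.
Unset Strict Implicit.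
Unset Printing Implicit Defensive.
Import Order.TTheory GRing.Theory Num.Theory.
Import numFieldNormedType.Exports.
Local Open Scope classical_set_scope.
Local Open Scope ring_scope.

(* Take F to be the point mass at 1; then both expected-price maps are
   explicit piecewise-linear functions of q.  For WDPP the map is
   alpha + (1 - alpha) q below 1 and (1 - alpha) q above 1: the price shrinks
   geometrically until it is at most 1 and then approaches the equilibrium 1
   geometrically (for alpha = 0 every price is an equilibrium).  For UDPP the
   map is (1 + alpha delta) q below 1 and (1 - alpha) q above 1: its only
   equilibrium is 0, yet the orbit of 1 never drops below 1 - alpha > 0. *)

Section dirac_product.
Context {d1 d2 : measure_display} {T1 : measurableType d1} {T2 : measurableType d2}.
Context {R : realType}.

Lemma product_measure_dirac (a : T1) (b : T2) (X : set (T1 * T2)) :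
  measurable X ->
  ((\d_a : probability T1 R) \x (\d_b : probability T2 R))%E X = \d_(a, b) X.
Proof.
apply: product_measure_unique => A B _ _.
by rewrite /= !diracE in_setX -EFinM -natrM mulnb.
Qed.

End dirac_product.

Lemma integrable_dirac d (T : measurableType d) (R : realType) (a : T) (f : T -> R) :
  measurable_fun setT f -> (\d_a).-integrable setT (fun x => (f x)%:E).
Proof.
move=> mf; apply/integrableP; split; first exact/measurable_EFinP.
rewrite integral_dirac ?diracT ?mul1e ?ltry //.
by apply/measurable_EFinP; exact: measurableT_comp.
Qed.

Lemma ET2_dirac (R : realType) (a : R) (T : R -> seq R -> R) (q : R) :
  measurable_fun setT (fun p : R * R => T q [:: p.1; p.2]) ->
  ET2 \d_a T q = T q [:: a; a].
Proof.
move=> mT; rewrite /ET2 (eq_measure_integral \d_(a, a)); last first.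
  by move=> A mA _; exact: product_measure_dirac.
by rewrite integral_dirac ?diracT ?mul1e //; exact/measurable_EFinP.
Qed.

Lemma measurable_fun_threshold d (T : measurableType d) (R : realType)
    (q : R) (f g : T -> R) :
  measurable_fun setT f -> measurable_fun setT g ->
  measurable_fun setT (fun t => if q <= f t then g t else 0).
Proof.
by move=> mf mg; apply: measurable_fun_ifT => //; exact: measurable_fun_ler.
Qed.

Section two_bidders.
Variable R : realType.
Implicit Types alpha delta q x y : R.

Lemma TW2E alpha q x y : TW 2 alpha q [:: x; y] =
  alpha / 2 * ((if q <= x then x else 0) + (if q <= y then y else 0)) + (1 - alpha) * q.
Proof.
rewrite /TW /blockW take_oversize; last by rewrite size_sort /Mq size_filter count_size.
rewrite (perm_big _ (permEl (perm_sort _ _))) /Mq /=.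
by case: ifP => _; case: ifP => _; rewrite ?big_cons ?big_nil /= ?addr0 ?add0r.
Qed.

Lemma TU2E alpha delta q x y : TU 2 alpha delta q [:: x; y] =
  alpha * (((if q <= x then 1 else 0) + (if q <= y then 1 else 0)) / 2) * (1 + delta) * q
  + (1 - alpha) * q.
Proof.
by rewrite /TU /Mq /=; case: ifP => _; case: ifP => _; rewrite /= ?addr0 ?add0r.
Qed.

Lemma measurable_TW2 alpha q :
  measurable_fun setT (fun p : R * R => TW 2 alpha q [:: p.1; p.2]).
Proof.
under eq_fun do rewrite TW2E.
apply: measurable_funD => //; apply: measurable_funM => //.
by apply: measurable_funD; apply: measurable_fun_threshold.
Qed.

Lemma measurable_TU2 alpha delta q :
  measurable_fun setT (fun p : R * R => TU 2 alpha delta q [:: p.1; p.2]).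
Proof.
under eq_fun do rewrite TU2E.
apply: measurable_funD => //; do 4 apply: measurable_funM => //.
by apply: measurable_funD; apply: measurable_fun_threshold.
Qed.

End two_bidders.

Section wdpp_price.
Variables (R : archiRealFieldType) (alpha : R).

Definition wdpp_price (q : R) : R :=
  if q <= 1 then alpha + (1 - alpha) * q else (1 - alpha) * q.

Lemma wdpp_price1 : wdpp_price 1 = 1.
Proof. by rewrite /wdpp_price lexx; ring. Qed.

Lemma wdpp_price0 q : alpha = 0 -> wdpp_price q = q.
Proof. by move=> alpha0; rewrite /wdpp_price alpha0 subr0 mul1r add0r; case: ifP. Qed.

Lemma iter_wdpp_price_le1 k q : 0 <= alpha <= 1 -> q <= 1 ->
  iter k wdpp_price q = 1 - (1 - alpha) ^+ k * (1 - q).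
Proof.
move=> /andP[alpha_ge0 alpha_le1] q_le1.
elim: k => [|k IH]; first by rewrite /= expr0 mul1r; ring.
have rk_ge0 : 0 <= (1 - alpha) ^+ k by rewrite exprn_ge0 // subr_ge0.
rewrite iterS IH /wdpp_price ifT ?exprS; first ring.
by rewrite gerBl mulr_ge0 // subr_ge0.
Qed.

Lemma iter_wdpp_price_le k q : 0 <= alpha <= 1 ->
  iter k wdpp_price q <= 1 \/ iter k wdpp_price q <= (1 - alpha) ^+ k * q.
Proof.
move=> /andP[alpha_ge0 alpha_le1].
elim: k => [|k]; first by right; rewrite expr0 mul1r.
rewrite iterS; move: (iter k _ q) => u IH; rewrite /wdpp_price.
case: ifP => [u_le1|/negbT]; first by left; nra.
rewrite -ltNge => u_gt1; right; rewrite exprS -mulrA ler_wpM2l ?subr_ge0 //.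
by case: IH => // /(lt_le_trans u_gt1); rewrite ltxx.
Qed.

Lemma iter_wdpp_price_eventually_le1 q : 0 < alpha <= 1 ->
  exists N, iter N wdpp_price q <= 1.
Proof.
move=> /andP[alpha_gt0 alpha_le1]; have alpha_ge0_le1 : 0 <= alpha <= 1 by rewrite ltW.
have r_lt1 : `|1 - alpha| < 1 by rewrite ger0_norm ?subr_ge0 //; lra.
have /cvgr_lt/(_ _ ltr01) [N _ rkq_lt1] : (fun k => (1 - alpha) ^+ k * q) @ \oo --> 0.
  by rewrite -(mul0r q); exact: cvgM (cvg_expr r_lt1) (cvg_cst _).
exists N; have := rkq_lt1 N (leqnn N).
by case: (iter_wdpp_price_le N q alpha_ge0_le1) => // ? ?; lra.
Qed.

Lemma iter_wdpp_price_cvg q : 0 < alpha <= 1 ->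
  (fun k : nat => iter k wdpp_price q) @ \oo --> (1 : R).
Proof.
move=> alpha01; have [N uN_le1] := iter_wdpp_price_eventually_le1 q alpha01.
have /andP[alpha_gt0 alpha_le1] := alpha01.
have alpha_ge0_le1 : 0 <= alpha <= 1 by rewrite ltW.
have r_lt1 : `|1 - alpha| < 1 by rewrite ger0_norm; lra.
set c := 1 - iter N wdpp_price q.
have : (fun k => 1 - (1 - alpha) ^+ k * c) @ \oo --> 1 - 0 * c.
  exact: cvgB (cvg_cst _) (cvgM (cvg_expr r_lt1) (cvg_cst _)).
rewrite mul0r subr0 => shifted_cvg; rewrite -(cvg_shiftn N).
by under [X in X @ _ --> _]funext => k do
  rewrite /= iterD (iter_wdpp_price_le1 k alpha_ge0_le1 uN_le1).
Qed.

End wdpp_price.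

Section udpp_price.
Variables (R : realFieldType) (alpha delta : R).

Definition udpp_price (q : R) : R :=
  if q <= 1 then (1 + alpha * delta) * q else (1 - alpha) * q.

Lemma udpp_price_fixed_eq0 z : 0 < alpha -> 0 < delta -> udpp_price z = z -> z = 0.
Proof.
rewrite /udpp_price => alpha_gt0 delta_gt0; case: ifP => _ fixed_z.
  have /eqP : alpha * delta * z = 0 by lra.
  by rewrite mulf_eq0 mulf_eq0 => /orP[/orP[]|] /eqP; lra.
have /eqP : alpha * z = 0 by lra.
by rewrite mulf_eq0 => /orP[] /eqP; lra.
Qed.

Lemma udpp_price_ge q : 0 <= alpha <= 1 -> 0 <= delta ->
  1 - alpha <= q -> 1 - alpha <= udpp_price q.
Proof.
move=> /andP[alpha_ge0 alpha_le1] delta_ge0 q_ge; rewrite /udpp_price.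
case: ifP => [_|/negbT]; last by rewrite -ltNge; nra.
have : 0 <= alpha * delta * q by rewrite !mulr_ge0 //; lra.
lra.
Qed.

Lemma udpp_price_orbit_not_cvg_fixed z : 0 < alpha < 1 -> 0 < delta ->
  udpp_price z = z -> ~ (fun k : nat => iter k udpp_price 1) @ \oo --> z.
Proof.
move=> /andP[alpha_gt0 alpha_lt1] delta_gt0 /udpp_price_fixed_eq0 -> // orbit_cvg.
have orbit_ge k : 1 - alpha <= iter k udpp_price 1.
  elim: k => [|k IH] /=; first lra.
  by apply: udpp_price_ge => //; [rewrite !ltW | rewrite ltW].
have : 1 - alpha <= 0 by apply: cvgr_to_ge orbit_cvg _; exact: nearW.
lra.
Qed.

End udpp_price.

Lemma ET2_dirac1_TW (R : realType) (alpha : R) :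
  ET2 \d_(1 : R) (TW 2 alpha) = wdpp_price alpha.
Proof.
apply/funext => q; rewrite ET2_dirac ?TW2E; last exact: measurable_TW2.
by rewrite /wdpp_price; case: ifP => _; lra.
Qed.

Lemma ET2_dirac1_TU (R : realType) (alpha delta : R) :
  ET2 \d_(1 : R) (TU 2 alpha delta) = udpp_price alpha delta.
Proof.
apply/funext => q; rewrite ET2_dirac ?TU2E; last exact: measurable_TU2.
by rewrite /udpp_price; case: ifP => _; lra.
Qed.

Theorem mainTheorem4 (R : realType) :
  exists (m : nat) (F : probability R R),
    (0 < m)%N /\
    F [set x : R | 0 <= x] = 1%E /\
    F.-integrable setT (fun x : R => x%:E) /\
    (forall alpha : R, 0 <= alpha <= 1 ->
       asymptotically_stable F (TW m alpha)) /\
    (forall alpha delta : R, 0 < alpha < 1 -> 0 < delta ->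
       ~ asymptotically_stable F (TU m alpha delta)).
Proof.
exists 2%N, \d_(1 : R); split => //.
split; first by rewrite /= diracE (@mem_set _ [set x : R | 0 <= x] 1 ler01).
split; first exact: integrable_dirac.
split=> [alpha alpha01 q0 _ | alpha delta alpha01 delta_gt0 /(_ 1 ltr01) [z []]].
  rewrite ET2_dirac1_TW; have [alpha0 | alpha_neq0] := eqVneq alpha 0.
    exists q0; split; first exact: wdpp_price0.
    under [X in X @ _ --> _]funext => k do rewrite iter_fix ?wdpp_price0 //.
    exact: cvg_cst.
  exists 1; split; first exact: wdpp_price1.
  by apply: iter_wdpp_price_cvg; rewrite lt0r alpha_neq0 /=.
by rewrite ET2_dirac1_TU; exact: udpp_price_orbit_not_cvg_fixed.
Qed.
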